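(* For any $p$-regular multigraph $G$ on $d$ vertices with $b$ edges and any $T\in\mathrm{Sym}^p(\mathbb{R}^n)$, $$\kappa^c_G(T)=\sum_{S\subseteq\mathrm{Frob}(G)}(-1)^{|S|}\,(n-b+p|S|)^{\underline{p|S|}}\,\kappa_{G\setminus S}(T),$$ where $G\setminus S$ is $G$ with the Frobenius pairs in $S$ removed.
   Context: $\mathrm{Sym}^p(\mathbb{R}^n)$: real symmetric $p$-ary tensors; $T_S$ is the entry indexed by a multiset. $(Q\cdot T)_{j}=\sum_{i\in[n]^p}T_i\prod_tQ_{i_t,j_t}$. $m^{\underline k}=m(m-1)\cdots(m-k+1)$. Multigraphs $G=(V,E)$ may have loops and parallel edges (loop contributes 2 to degree); $i(\partial v)$ is the multiset of labels at $v$ of $i\in[n]^E$ (loops twice). A Frobenius pair is a connected component consisting of two vertices joined by $p$ parallel edges; $\mathrm{Frob}(G)$ is the set of Frobenius-pair components of $G$. $m^!_G(T)=\sum_{i\in[n]^E\text{ injective}}\prod_vT_{i(\partial v)}$; with $U$ the vertices in Frobenius pairs and $i(\pi)$ the edge-label multiset of a pair $\pi$, $m^c_G(T)=\sum_{i\text{ injective}}\big[\prod_{v\notin U}T_{i(\partial v)}\prod_{\pi\in\mathrm{Frob}(G)}(T_{i(\pi)}^2-1)\big]$. $\kappa_G(T)=\mathbb{E}_Qm^!_G(Q\cdot T)$ and $\kappa^c_G(T)=\mathbb{E}_Qm^c_G(Q\cdot T)$, $Q$ Haar on $\mathcal{O}(n)$; $\kappa_\emptyset=\kappa^c_\emptyset=1$.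 *)

From HB Require Import structures.
From mathcomp Require Import all_boot all_order all_algebra.
From mathcomp Require Import all_classical all_reals all_analysis.
Set Implicit Arguments. Unset Strict Implicit. Unset Printing Implicit Defensive.
Import Order.TTheory GRing.Theory Num.Theory.
Import numFieldNormedType.Exports.
Local Open Scope ring_scope.

Definition mxB (R : realType) (n : nat) := g_sigma_algebraType (@open 'M[R]_n).

Definition orthogonal_mx (R : realType) (n : nat) (Q : 'M[R]_n) : bool :=
  Q *m Q^T == 1%:M.

Definition is_haar (R : realType) (n : nat) (mu : probability (mxB R n) R) : Prop :=
  mu [set Q : mxB R n | orthogonal_mx Q]%classic = 1%E /\
  (forall U : 'M[R]_n, orthogonal_mx U ->
     forall A : set (mxB R n), measurable A ->
       mu ((fun Q : mxB R n => (U *m Q : mxB R n)) @^-1` A)%classic = mu A).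

(* T s is the entry indexed by the multiset of elements of s;
   symmetric in its p indices, and zero on index lists of length <> p. *)
Definition sym_tensor (R : realType) (n p : nat) (T : seq 'I_n -> R) : Prop :=
  (forall s s' : seq 'I_n, perm_eq s s' -> T s = T s') /\
  (forall s : seq 'I_n, size s != p -> T s = 0).

Definition tact (R : realType) (n p : nat) (Q : 'M[R]_n) (T : seq 'I_n -> R)
  : seq 'I_n -> R :=
  fun j => if size j == p then
     \sum_(i : p.-tuple 'I_n) T i * \prod_(k <- zip i j) Q k.1 k.2
   else 0.

Definition ffact (R : realType) (x : R) (k : nat) : R :=
  \prod_(i < k) (x - i%:R).

(* A multigraph: finite vertex type V, finite edge type E, and endpoints
   ends e = (a, b); a loop has a = b.  Subgraphs are given by a vertex set
   Vs and an edge set Es (with the same incidence). *)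

Section Graph.
Variables (V E : finType) (ends : E -> V * V).

Definition inc (e : E) (v : V) : nat := ((ends e).1 == v) + ((ends e).2 == v).

Definition deg (v : V) : nat := \sum_(e : E) inc e v.

Definition regular (p : nat) : Prop := forall v : V, deg v = p.

(* Frobenius pair (vertex set A = {u, v}): a connected component made of two
   distinct vertices joined by p parallel edges. *)
Definition is_frob (p : nat) (A : {set V}) : bool :=
  [exists u : V, exists v : V,
    [&& u != v, A == [set u; v], (0 < p)%N,
        #|[set e : E | (ends e == (u, v)) || (ends e == (v, u))]| == p &
        [forall e : E, (((ends e).1 \in A) || ((ends e).2 \in A)) ==>
                        ((ends e == (u, v)) || (ends e == (v, u)))]]].

Definition frobs (p : nat) : {set {set V}} := [set A | is_frob p A].

Variables (n : nat).

Definition valid_lab (Es : {set E}) (lab : {ffun E -> option 'I_n}) : bool :=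
  [forall e, (e \in Es) == (lab e != None)] &&
  [forall e1, forall e2,
     [&& e1 \in Es, e2 \in Es & lab e1 == lab e2] ==> (e1 == e2)].

Definition vlab (lab : {ffun E -> option 'I_n}) (v : V) : seq 'I_n :=
  flatten [seq (if lab e is Some x then nseq (inc e v) x else [::]) | e <- enum E].

Definition plab (lab : {ffun E -> option 'I_n}) (A : {set V}) : seq 'I_n :=
  flatten [seq (if lab e is Some x then [:: x] else [::])
          | e <- enum E & ((ends e).1 \in A) || ((ends e).2 \in A)].

Variable (R : realType).

Definition minj (Vs : {set V}) (Es : {set E}) (T : seq 'I_n -> R) : R :=
  \sum_(lab : {ffun E -> option 'I_n} | valid_lab Es lab)
     \prod_(v in Vs) T (vlab lab v).

Definition mc (p : nat) (T : seq 'I_n -> R) : R :=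
  \sum_(lab : {ffun E -> option 'I_n} | valid_lab [set: E]%SET lab)
    ((\prod_(v in ~: finset.cover (frobs p)) T (vlab lab v)) *
     \prod_(A in frobs p) (T (plab lab A) ^+ 2 - 1)).

Definition rmV (S : {set {set V}}) : {set V} := ~: finset.cover S.
Definition rmE (S : {set {set V}}) : {set E} :=
  [set e : E | ((ends e).1 \notin finset.cover S) && ((ends e).2 \notin finset.cover S)].

Variable (mu : probability (mxB R n) R).

Definition kappa (p : nat) (Vs : {set V}) (Es : {set E}) (T : seq 'I_n -> R) : R :=
  Rintegral mu setT (fun Q : mxB R n => minj Vs Es (tact p Q T)).

Definition kappac (p : nat) (T : seq 'I_n -> R) : R :=
  Rintegral mu setT (fun Q : mxB R n => mc p (tact p Q T)).

End Graph.

From HB Require Import structures.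
From mathcomp Require Import all_boot all_order all_algebra.
From mathcomp Require Import all_classical all_reals all_analysis.
From mathcomp Require Import lra.
Set Implicit Arguments. Unset Strict Implicit. Unset Printing Implicit Defensive.
Import Order.TTheory GRing.Theory Num.Theory.
Import numFieldNormedType.Exports.
Local Open Scope ring_scope.

(* The identity holds pointwise in Q, for m^c_G and the m^!_{G\S} themselves,
   and then integrates term by term, since all integrands are bounded on O(n),
   which carries mu.  Pointwise, expand prod_pi (T_{i(pi)}^2 - 1) over the subsets S
   of Frobenius pairs.  Both vertices of a pair pi see exactly the labels of pi,
   so T_{i(pi)}^2 is the product of T_{i(dv)} over the two vertices of pi, and
   the S-term becomes the product of T_{i(dv)} over the vertices of G\S.  This
   depends only on the labels of the edges of G\S, and each injective labeling
   of those b - p|S| edges extends in exactly (n - b + p|S|)^{p|S|} ways to an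
   injective labeling of all b edges. *)

Lemma prod_subr1 (R : comPzRingType) (I : finType) (F : {set I}) (x : I -> R) :
  \prod_(i in F) (x i - 1) =
  \sum_(S : {set I} | S \subset F) (-1) ^+ #|S| * \prod_(i in F :\: S) x i.
Proof.
rewrite big_mkcond /=.
transitivity (\prod_i ((if i \in F then -1 else 0) + (if i \in F then x i else 1))).
  by apply: eq_bigr => i _; case: (i \in F); rewrite ?add0r // addrC.
rewrite bigA_distr [RHS]big_mkcond /=; apply: eq_bigr => S _.
have [SF|] := boolP (S \subset F); last first.
  by case/fintype.subsetPn => i iS iF; rewrite (bigD1 i) //= iS (negbTE iF) mul0r.
rewrite (bigID (mem S)) /= -prodr_const; congr (_ * _).
  by apply: eq_bigr => i iS; rewrite iS (fintype.subsetP SF).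
rewrite [LHS]big_mkcond [RHS]big_mkcond; apply: eq_bigr => i _.
by rewrite inE; case: (i \in S).
Qed.

Section Labelings.
Variables (E : finType) (n : nat).
Local Notation L := {ffun E -> option 'I_n}.
Implicit Types (Es : {set E}) (lab : L).

Lemma validP Es lab :
  reflect ((forall e, (e \in Es) = (lab e != None)) /\ {in Es &, injective lab})
          (valid_lab Es lab).
Proof.
apply: (iffP andP) => [[/forallP supp /forallP inj]|[supp inj]]; split.
- by move=> e; apply/eqP.
- move=> e1 e2 e1Es e2Es lab12; apply/eqP.
  by move/forallP/(_ e2)/implyP: (inj e1); apply; rewrite e1Es e2Es lab12 /=.
- by apply/forallP => e; rewrite supp.
apply/forallP => e1; apply/forallP => e2; apply/implyP => /and3P [e1Es e2Es /eqP].
by move/(inj _ _ e1Es e2Es) ->.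
Qed.

Lemma valid_lab_card_leq Es lab : valid_lab Es lab -> (#|Es| <= n)%N.
Proof.
case/validP => supp inj; rewrite -(card_in_imset inj).
apply: (@leq_trans #|[set~ (None : option 'I_n)]|).
  by apply/subset_leq_card/fintype.subsetP => _ /imsetP [e eEs ->]; rewrite !inE -supp.
by rewrite cardsC1 card_option card_ord.
Qed.

Definition restrict_lab Es lab : L := [ffun e => if e \in Es then lab e else None].

Lemma valid_restrict_lab Es lab :
  valid_lab [set: E] lab -> valid_lab Es (restrict_lab Es lab).
Proof.
case/validP => supp inj; apply/validP; split=> [e|e1 e2 e1Es e2Es].
  by rewrite ffunE; case: ifP => // _; rewrite -supp inE.
by rewrite !ffunE e1Es e2Es; apply: inj; rewrite inE.
Qed.

End Labelings.

(* An extension of lab' is determined by its values off Es, which form an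
   injective map into the labels left unused by lab'. *)
Section Extensions.
Variables (E : finType) (n : nat) (Es : {set E}) (lab' : {ffun E -> option 'I_n}).
Hypothesis lab'_valid : valid_lab Es lab'.
Local Notation L := {ffun E -> option 'I_n}.
Local Notation D := {e : E | e \notin Es}.

Definition extensions : {set L} :=
  [set lab | valid_lab [set: E] lab & restrict_lab Es lab == lab'].

Definition free_labels : {set option 'I_n} := ~: (None |: lab' @: Es).

Definition outer_labels (lab : L) : {ffun D -> option 'I_n} := [ffun d => lab (val d)].

Lemma card_free_labels : #|free_labels| = (n - #|Es|)%N.
Proof.
case/validP: lab'_valid => supp inj.
have None_notin : None \notin lab' @: Es.
  by apply/imsetP => -[e]; rewrite supp => /[swap] <-.
by rewrite cardsCs finset.setCK card_option card_ord cardsU1 None_notin card_in_imset.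
Qed.

Lemma extension_agrees (lab : L) e :
  lab \in extensions -> e \in Es -> lab e = lab' e.
Proof. by rewrite inE => /andP [_ /eqP <-] eEs; rewrite ffunE eEs. Qed.

Lemma outer_labels_inj : {in extensions &, injective outer_labels}.
Proof.
move=> lab1 lab2 ext1 ext2 eq12; apply/ffunP => e.
have [eEs|eEs] := boolP (e \in Es).
  by rewrite !extension_agrees.
by move/ffunP/(_ (exist _ e eEs)): eq12; rewrite !ffunE.
Qed.

Lemma outer_labels_extensions :
  outer_labels @: extensions = [set f in ffun_on (mem free_labels) | injectiveb f].
Proof.
case/validP: lab'_valid => supp' inj'.
apply/setP => f; apply/imsetP/idP => [[lab ext_lab ->]|].
  move: (ext_lab); rewrite !inE => /andP [/validP [supp inj] _].
  apply/andP; split; last first.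
    by apply/injectiveP => d1 d2; rewrite !ffunE => /inj eq12; apply/val_inj/eq12.
  apply/ffun_onP => d; rewrite ffunE !inE negb_or -supp inE /=.
  apply/imsetP => -[e eEs]; rewrite -(extension_agrees ext_lab eEs).
  by move/inj; rewrite !inE => /(_ isT isT) eq_de; have := valP d; rewrite /= eq_de eEs.
rewrite inE => /andP [/ffun_onP free_f /injectiveP inj_f].
have f_free d : (f d != None) && (f d \notin lab' @: Es).
  by have := free_f d; rewrite !inE negb_or.
pose lab : L := [ffun e => if insub e is Some d then f d else lab' e].
exists lab; last by apply/ffunP => d; rewrite !ffunE valK.
rewrite inE; apply/andP; split; last first.
  apply/eqP/ffunP => e; rewrite !ffunE; case: ifP => eEs; first by rewrite insubF ?eEs.
  by move: eEs; rewrite supp' => /negbFE/eqP ->.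
apply/validP; split=> [e|e1 e2 _ _]; rewrite ?inE !ffunE.
  by case: insubP => [d _ _|/negPn]; [case/andP: (f_free d)|rewrite supp'].
case: insubP => [d1 _ <-|/negPn e1Es]; case: insubP => [d2 _ <-|/negPn e2Es].
- by move/inj_f ->.
- by move=> eq12; case/andP: (f_free d1) => _; rewrite eq12 imset_f.
- by move=> eq12; case/andP: (f_free d2) => _; rewrite -eq12 imset_f.
- exact: inj'.
Qed.

Lemma card_extensions : #|extensions| = ((n - #|Es|) ^_ #|~: Es|)%N.
Proof.
rewrite -card_free_labels -(card_in_imset outer_labels_inj) outer_labels_extensions.
rewrite card_inj_ffuns_on card_sig; congr (_ ^_ _).
by apply: eq_card => e; rewrite !inE.
Qed.

End Extensions.

Lemma sum_restrict_lab (E : finType) (n : nat) (M : nmodType) (Es : {set E})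
    (F : {ffun E -> option 'I_n} -> M) :
  \sum_(lab | valid_lab [set: E] lab) F (restrict_lab Es lab) =
  \sum_(lab' | valid_lab Es lab') (F lab' *+ (n - #|Es|) ^_ #|~: Es|).
Proof.
rewrite (partition_big (restrict_lab Es) (valid_lab Es)) /=; last exact: valid_restrict_lab.
apply: eq_bigr => lab' lab'_valid; rewrite -(card_extensions lab'_valid) -sumr_const.
by apply: eq_big => [lab|lab /andP [_ /eqP ->]]; rewrite ?inE.
Qed.

Lemma cover_setD (T : finType) (P Q : {set {set T}}) :
  finset.trivIset P -> Q \subset P ->
  finset.cover (P :\: Q) = finset.cover P :\: finset.cover Q.
Proof.
move=> triP QP; apply/setP => x; rewrite inE.
apply/finset.bigcupP/andP => [[A /setDP [AP AQ] xA]|[xQ /finset.bigcupP [A AP xA]]].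
  split; last by apply/finset.bigcupP; exists A.
  apply/finset.bigcupP => -[B BQ xB]; case/negP: AQ.
  by rewrite -(def_pblock triP AP xA) (def_pblock triP (fintype.subsetP QP _ BQ) xB).
exists A => //; rewrite inE AP andbT; apply: contra xQ => AQ.
by apply/finset.bigcupP; exists A.
Qed.

Lemma flatten_map_filter (T U : Type) (s : seq T) (P : pred T) (f g : T -> seq U) :
  (forall x, P x -> f x = g x) -> (forall x, ~~ P x -> g x = [::]) ->
  flatten [seq f x | x <- s & P x] = flatten [seq g x | x <- s].
Proof.
move=> eq_fg g_nil; elim: s => [//|x s IHs] /=.
by case: (boolP (P x)) => Px /=; rewrite (eq_fg, g_nil) // IHs.
Qed.

Section Frobenius.
Variables (V E : finType) (ends : E -> V * V) (p : nat).
Local Notation F := (frobs ends p).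

Definition touches (A : {set V}) (e : E) : bool :=
  ((ends e).1 \in A) || ((ends e).2 \in A).

Lemma frobP A : A \in F -> exists u v,
  [/\ u != v, A = [set u; v], (0 < p)%N, #|[set e | touches A e]| = p &
      forall e, touches A e = (ends e == (u, v)) || (ends e == (v, u))].
Proof.
rewrite inE => /existsP [u /existsP [v]].
case/and5P => uv /eqP defA p_gt0 /eqP card_uv /forallP closed.
have touchesE e : touches A e = (ends e == (u, v)) || (ends e == (v, u)).
  apply/idP/idP; first exact: (implyP (closed e)).
  by rewrite /touches defA; case/orP => /eqP ->; rewrite !inE eqxx ?orbT.
exists u, v; split=> //; rewrite -card_uv; apply: eq_card => e.
by rewrite !inE touchesE.
Qed.

Lemma frob_touches A e : A \in F -> touches A e -> A = [set (ends e).1; (ends e).2].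
Proof.
case/frobP => u [v [_ -> _ _ ->]].
by case/orP => /eqP -> //=; rewrite finset.setUC.
Qed.

Lemma frobs_meet A B w : A \in F -> B \in F -> w \in A -> w \in B -> A = B.
Proof.
move=> AF BF wA wB; have [u [v [_ defA p_gt0 card_e _]]] := frobP AF.
have [e] : exists e, e \in [set e | touches A e] by apply/card_gt0P; rewrite card_e.
rewrite inE => eA; rewrite (frob_touches AF eA) in wA *.
apply/esym/(frob_touches BF); rewrite /touches.
by move: wA; rewrite !inE => /orP [] /eqP <-; rewrite wB ?orbT.
Qed.

Lemma trivIset_frobs : finset.trivIset F.
Proof.
apply/finset.trivIsetP => A B AF BF; apply: contraR => /pred0Pn [w /andP [wA wB]].
by rewrite (frobs_meet AF BF wA wB).
Qed.

Lemma touches_coverP (S : {set {set V}}) e :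
  reflect (exists2 A, A \in S & touches A e) (touches (finset.cover S) e).
Proof.
apply: (iffP orP) => [|[A AS /orP eA]].
  by case=> /finset.bigcupP [A AS wA]; exists A; rewrite // /touches wA ?orbT.
by case: eA => wA; [left|right]; apply/finset.bigcupP; exists A.
Qed.

Lemma frobs_cover_closed (S : {set {set V}}) e : S \subset F ->
  touches (finset.cover S) e -> [set (ends e).1; (ends e).2] \subset finset.cover S.
Proof.
move=> SF /touches_coverP [A AS eA].
rewrite -(frob_touches (fintype.subsetP SF _ AS) eA).
by apply/fintype.subsetP => w wA; apply/finset.bigcupP; exists A.
Qed.

Lemma sum_touches_frobs (S : {set {set V}}) e : S \subset F ->
  \sum_(A in S) (touches A e : nat) = touches (finset.cover S) e.
Proof.
move=> SF; have [/touches_coverP [A AS eA]|eNS] := boolP (touches _ e).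
  rewrite (bigD1 A) //= eA big1 // => B /andP [BS BA]; apply/eqP; rewrite eqb0.
  apply: contra BA => eB; apply/eqP.
  rewrite (frob_touches (fintype.subsetP SF _ BS) eB).
  by rewrite (frob_touches (fintype.subsetP SF _ AS) eA).
rewrite big1 // => A AS; apply/eqP; rewrite eqb0; apply: contra eNS => eA.
by apply/touches_coverP; exists A.
Qed.

Lemma card_notin_rmE (S : {set {set V}}) : S \subset F ->
  #|~: rmE ends S| = (p * #|S|)%N.
Proof.
move=> SF; transitivity (\sum_e \sum_(A in S) (touches A e : nat)).
  rewrite -sum1_card big_mkcond; apply: eq_bigr => e _.
  by rewrite sum_touches_frobs // !inE negb_and !negbK /touches; case: (_ || _).
rewrite exchange_big /= mulnC -sum_nat_const; apply: eq_bigr => A AS.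
have [u [v [_ _ _ <- _]]] := frobP (fintype.subsetP SF _ AS).
by rewrite -sum1_card [RHS]big_mkcond; apply: eq_bigr => e _; rewrite inE; case: touches.
Qed.

End Frobenius.

Section FrobeniusLabels.
Variables (V E : finType) (ends : E -> V * V) (p n : nat).
Local Notation F := (frobs ends p).
Local Notation L := {ffun E -> option 'I_n}.
Implicit Types (lab : L) (S : {set {set V}}).

Lemma eq_vlab lab1 lab2 v :
  (forall e, inc ends e v != 0%N -> lab1 e = lab2 e) ->
  vlab ends lab1 v = vlab ends lab2 v.
Proof.
move=> eq12; congr flatten; apply: eq_map => e.
by have [->|/eq12 ->] := eqVneq (inc ends e v) 0%N; case: (lab1 e); case: (lab2 e).
Qed.

Lemma inc_frob A e w : A \in F -> w \in A -> inc ends e w = touches ends A e.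
Proof.
move=> AF wA; have [u [v [uv defA _ _ touchesE]]] := frobP AF.
have vu : v != u by rewrite eq_sym.
rewrite /inc; have [eA|] := boolP (touches ends A e).
  move: eA; rewrite touchesE => /orP [] /eqP -> /=; move: wA; rewrite defA !inE;
    by case/orP => /eqP ->; rewrite eqxx ?(negbTE uv) ?(negbTE vu).
rewrite /touches negb_or => /andP [e1A e2A].
have -> : ((ends e).1 == w) = false by apply: contraNF e1A => /eqP ->.
by have -> : ((ends e).2 == w) = false by apply: contraNF e2A => /eqP ->.
Qed.

Lemma plab_vlab lab A w : A \in F -> w \in A -> plab ends lab A = vlab ends lab w.
Proof.
move=> AF wA; apply: flatten_map_filter => e; rewrite (inc_frob e AF wA).
  by move=> eA; rewrite [touches _ _ _]eA; case: (lab e).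
by move=> /negbTE eNA; rewrite [touches _ _ _]eNA; case: (lab e).
Qed.

Lemma vlab_restrict S lab v : S \subset F -> v \notin finset.cover S ->
  vlab ends (restrict_lab (rmE ends S) lab) v = vlab ends lab v.
Proof.
move=> SF vS; apply: eq_vlab => e inc_v; rewrite ffunE inE.
case: ifP => // /negbT; rewrite negb_and !negbK -/(touches ends _ e).
move/(frobs_cover_closed SF).
move/fintype.subsetP/(_ v); rewrite (negbTE vS) !inE => /implyP; rewrite implybF.
by move: inc_v; rewrite /inc ![(_ == v)]eq_sym; case: (v == _); case: (v == _).
Qed.

Lemma frob_plab_sqr (R : comPzSemiRingType) (T : seq 'I_n -> R) lab A : A \in F ->
  T (plab ends lab A) ^+ 2 = \prod_(w in A) T (vlab ends lab w).
Proof.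
move=> AF; have [u [v [uv defA _ _ _]]] := frobP AF.
have [uA vA] : u \in A /\ v \in A by rewrite defA !inE !eqxx orbT.
rewrite expr2 {1}(plab_vlab lab AF uA) (plab_vlab lab AF vA).
by rewrite defA big_setU1 ?inE //= big_set1.
Qed.

End FrobeniusLabels.

Lemma ffact_nat (R : realType) (m k : nat) : ((m ^_ k)%:R : R) = ffact m%:R k.
Proof.
rewrite /ffact; elim: k => [|k IHk]; first by rewrite ffactn0 big_ord0.
rewrite big_ord_recr /= -IHk ffactnSr natrM.
have [km|/ffact_small ->] := leqP k m; first by rewrite natrB.
by rewrite !mul0r.
Qed.

Section FrobeniusExpansion.
Variables (V E : finType) (ends : E -> V * V) (p n : nat).
Local Notation F := (frobs ends p).
Local Notation L := {ffun E -> option 'I_n}.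
Implicit Types (lab : L) (S : {set {set V}}).

Lemma prod_vlab_frobs (R : comPzSemiRingType) (T : seq 'I_n -> R) lab S : S \subset F ->
  (\prod_(v in ~: finset.cover F) T (vlab ends lab v)) *
    \prod_(A in F :\: S) T (plab ends lab A) ^+ 2 =
  \prod_(v in ~: finset.cover S) T (vlab ends lab v).
Proof.
move=> SF; have coverSF : finset.cover S \subset finset.cover F.
  apply/fintype.subsetP => v /finset.bigcupP [A AS vA].
  by apply/finset.bigcupP; exists A; first exact: (fintype.subsetP SF).
have -> : \prod_(A in F :\: S) T (plab ends lab A) ^+ 2 =
          \prod_(A in F :\: S) \prod_(w in A) T (vlab ends lab w).
  by apply: eq_bigr => A /setDP [AF _]; exact: frob_plab_sqr _ _ AF.
rewrite -(finset.big_trivIset _ (trivIsetD S (trivIset_frobs ends p))).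
rewrite cover_setD ?trivIset_frobs //.
rewrite [RHS](bigID (mem (finset.cover F))) /= mulrC; congr (_ * _); apply: eq_bigl => v.
  by rewrite !inE.
rewrite !inE; have [vF|vNF] := boolP (v \in finset.cover F); rewrite ?andbF ?andbT //.
by rewrite (contra (fintype.subsetP coverSF v) vNF).
Qed.

Lemma mc_expand (R : realType) (T : seq 'I_n -> R) :
  mc ends p T =
  \sum_(S : {set {set V}} | S \subset F)
     (-1) ^+ #|S| * ffact (n%:R - #|E|%:R + (p * #|S|)%:R) (p * #|S|)
       * minj ends (rmV S) (rmE ends S) T.
Proof.
rewrite /mc.
under eq_bigr => lab _ do
  rewrite (prod_subr1 F (fun A => T (plab ends lab A) ^+ 2)) mulr_sumr.
rewrite exchange_big /=; apply: eq_bigr => S SF.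
under eq_bigr => lab _ do rewrite mulrCA (prod_vlab_frobs T lab SF).
rewrite -mulr_sumr -mulrA; congr (_ * _).
pose G lab' := \prod_(v in rmV S) T (vlab ends lab' v).
transitivity (\sum_(lab | valid_lab [set: E] lab) G (restrict_lab (rmE ends S) lab)).
  apply: eq_bigr => lab _; apply: eq_bigr => v; rewrite inE => vS.
  by rewrite (vlab_restrict _ SF vS).
rewrite (sum_restrict_lab _ G).
rewrite /minj mulr_sumr; apply: eq_bigr => lab' lab'_valid.
rewrite [RHS]mulrC -[LHS]mulr_natr (card_notin_rmE SF) ffact_nat; congr (_ * _).
rewrite natrB ?(valid_lab_card_leq lab'_valid) //.
have := cardsC (rmE ends S); rewrite (card_notin_rmE SF) => <-.
by rewrite natrD opprD addrA subrK.
Qed.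

End FrobeniusExpansion.

Section RealIntegrals.
Context d (T : measurableType d) (R : realType).

Lemma Rintegral_sumZl (mu : {measure set T -> \bar R}) (D : set T) (I : Type)
    (r : seq I) (P : pred I) (c : I -> R) (f : I -> T -> R) :
  measurable D -> (forall i, mu.-integrable D (EFin \o f i)) ->
  \int[mu]_(x in D) \sum_(i <- r | P i) c i * f i x =
  \sum_(i <- r | P i) c i * \int[mu]_(x in D) f i x.
Proof.
move=> mD intf; have intZ i : mu.-integrable D (EFin \o (fun x => c i * f i x)).
  have -> : EFin \o (fun x => c i * f i x) = (fun x => (c i)%:E * (EFin \o f i) x)%E.
    by apply/funext => x; rewrite /= EFinM.
  exact: integrableZl.
elim: r => [|i r IHr].
  by under eq_Rintegral do rewrite big_nil; rewrite big_nil /Rintegral integral0.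
under eq_Rintegral do rewrite big_cons; rewrite big_cons.
case: (P i) => //; rewrite RintegralD ?IHr ?RintegralZl //.
have -> : EFin \o (fun x => \sum_(j <- r | P j) c j * f j x) =
          (fun x => \sum_(j <- r | P j) (EFin \o (fun y => (c j * f j y)%R)) x)%E.
  by apply/funext => x; rewrite /= sumEFin.
exact: integrable_sum.
Qed.

Lemma probability_integrable_bounded (mu : probability T R) (A : set T)
    (f : T -> R) (C : R) :
  measurable A -> mu A = 1%E -> measurable_fun setT f ->
  (forall x, A x -> `|f x| <= C) -> mu.-integrable setT (EFin \o f).
Proof.
move=> mA muA mf f_le; apply/integrableP.
split; first exact/measurable_realfun.measurable_EFinP.
have [x Ax] : (A !=set0)%classic.
  apply/set0P/eqP => A0; move: muA.
  by rewrite A0 measure0 => /esym/eqP; rewrite onee_eq0.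
apply: (@le_lt_trans _ _ (C%:E * mu setT)%E); last by rewrite probability_setT mule1 ltry.
apply: integral_le_bound => //; first exact/measurable_realfun.measurable_EFinP.
  by rewrite lee_fin (le_trans _ (f_le x Ax)).
exists (~` A)%classic; split; first exact: measurableC.
  by move: (probability_setC mu mA); rewrite muA subee.
by move=> y /= f_big Ay; apply: f_big => _; rewrite lee_fin f_le.
Qed.

End RealIntegrals.

Section OrthogonalGroup.
Variables (R : realType) (n : nat).
Local Notation M := (mxB R n).

Lemma measurable_entry (i j : 'I_n) :
  measurable_fun setT (fun Q : M => (Q : 'M[R]_n) i j).
Proof.
apply: (measurability _ (measurable_realfun.RGenOpens.measurableE R)).
move=> _ [_ [a [b ->]] <-]; apply: sub_sigma_algebra; rewrite setTI.
by move/continuousP: (@coord_continuous R n n i j); apply; exact: interval_open.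
Qed.

Lemma measurable_tact (p : nat) (T : seq 'I_n -> R) (j : seq 'I_n) :
  measurable_fun setT (fun Q : M => tact p (Q : 'M[R]_n) T j).
Proof.
rewrite /tact; case: (size j == p); last exact: measurable_cst.
apply: measurable_sum => i; apply: measurable_realfun.measurable_funM => //.
by apply: measurable_prod => k _; exact: measurable_entry.
Qed.

Lemma measurable_minj (V E : finType) (ends : E -> V * V) (p : nat)
    (T : seq 'I_n -> R) (Vs : {set V}) (Es : {set E}) :
  measurable_fun setT (fun Q : M => minj ends Vs Es (tact p (Q : 'M[R]_n) T)).
Proof.
rewrite /minj; under eq_fun do rewrite big_mkcond.
apply: measurable_sum => lab; case: (valid_lab Es lab); last exact: measurable_cst.
under eq_fun do rewrite big_mkcond.
apply: measurable_prod => v _; case: (v \in Vs); last exact: measurable_cst.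
exact: measurable_tact.
Qed.

Lemma measurable_orthogonal : measurable [set Q : M | orthogonal_mx Q]%classic.
Proof.
have -> : [set Q : M | orthogonal_mx Q]%classic =
    (\bigcap_(ij in [set: 'I_n * 'I_n])
      ((fun Q : M => ((Q : 'M[R]_n) *m Q^T) ij.1 ij.2) @^-1`
         [set (1%:M : 'M[R]_n) ij.1 ij.2]))%classic.
  apply/seteqP; split => Q /=; first by move=> /eqP QQT [i j] _ /=; rewrite QQT.
  by move=> QQT; apply/eqP/matrixP => i j; exact: (QQT (i, j)).
have mQQT i j : measurable_fun setT (fun Q : M => ((Q : 'M[R]_n) *m Q^T) i j).
  under eq_fun do rewrite mxE; apply: measurable_sum => k.
  apply: measurable_realfun.measurable_funM; first exact: measurable_entry.
  by under eq_fun do rewrite mxE; exact: measurable_entry.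
apply: fin_bigcap_measurable; first exact: finite_finset.
move=> [i j] _ /=; rewrite -[X in measurable X]setTI.
by apply: mQQT => //; exact: measurable_set1.
Qed.

Lemma orthogonal_mx_entry_le1 (Q : 'M[R]_n) (i j : 'I_n) :
  orthogonal_mx Q -> `|Q i j| <= 1.
Proof.
move=> /eqP QQT; have : Q i j ^+ 2 <= 1.
  move/matrixP/(_ i i): QQT; rewrite !mxE eqxx mulr1n => <-.
  rewrite (bigD1 j) //= mxE -expr2 lerDl; apply: sumr_ge0 => k _.
  by rewrite mxE -expr2 sqr_ge0.
by move=> sqr_le1; rewrite ler_norml; apply/andP; split; nra.
Qed.

Lemma tact_le_on_orthogonal (p : nat) (T : seq 'I_n -> R) (Q : 'M[R]_n)
    (j : seq 'I_n) :
  orthogonal_mx Q -> `|tact p Q T j| <= \sum_(i : p.-tuple 'I_n) `|T i|.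
Proof.
move=> orthQ; rewrite /tact; case: ifP => _; last by rewrite normr0 sumr_ge0.
apply: (le_trans (ler_norm_sum _ _ _)); apply: ler_sum => i _.
rewrite normrM -[leRHS]mulr1 ler_wpM2l // normr_prod prodr_ile1 // => k _.
by rewrite normr_ge0 orthogonal_mx_entry_le1.
Qed.

Lemma minj_le_on_orthogonal (V E : finType) (ends : E -> V * V) (p : nat)
    (T : seq 'I_n -> R) (Vs : {set V}) (Es : {set E}) (Q : 'M[R]_n) :
  orthogonal_mx Q ->
  `|minj ends Vs Es (tact p Q T)| <=
    \sum_(lab : {ffun E -> option 'I_n} | valid_lab Es lab)
      \prod_(v in Vs) \sum_(i : p.-tuple 'I_n) `|T i|.
Proof.
move=> orthQ; apply: (le_trans (ler_norm_sum _ _ _)); apply: ler_sum => lab _.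
rewrite normr_prod; apply: ler_prod => v _.
by rewrite normr_ge0 tact_le_on_orthogonal.
Qed.

End OrthogonalGroup.

Theorem proposition4p19 (R : realType) (n p : nat) (V E : finType)
  (ends : E -> V * V) (mu : probability (mxB R n) R) (T : seq 'I_n -> R) :
  regular ends p -> is_haar mu -> sym_tensor p T ->
  kappac ends mu p T =
  \sum_(S : {set {set V}} | S \subset frobs ends p)
     (-1) ^+ #|S| * ffact (n%:R - #|E|%:R + (p * #|S|)%:R) (p * #|S|)
       * kappa ends mu p (rmV S) (rmE ends S) T.
Proof.
move=> _ [mu_orthogonal _] _; rewrite /kappac.
under eq_Rintegral do rewrite mc_expand.
rewrite Rintegral_sumZl // => S.
apply: (probability_integrable_bounded (@measurable_orthogonal R n) mu_orthogonal).
  exact: measurable_minj.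
by move=> Q; exact: minj_le_on_orthogonal.
Qed.
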